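(* For every $t \in \mathbb{N}_0$ and every integer $b \ge 3$, the cyclotomic polynomial $\Phi_b(x)$ does not divide \begin{align*} R_t(x) = {}& x^{8t+15} + x^{8t+14} + x^{8t+11} - x^{8t+10} - x^{8t+8} + 2x^{6t+9} - x^{4t+15} - x^{4t+11} - x^{4t+9} + 2x^{4t+8} \\ & - 2x^{4t+7} + x^{4t+6} + x^{4t+4} + x^{4t} - 2x^{2t+6} + x^7 + x^5 - x^4 - x - 1. \end{align*}
   Context: $\Phi_b(x) = \prod_\zeta (x-\zeta)$, where $\zeta$ ranges over the primitive $b$-th roots of unity, is the $b$-th cyclotomic polynomial. *)

From mathcomp Require Import all_boot all_order all_algebra all_field.
Set Implicit Arguments. Unset Strict Implicit. Unset Printing Implicit Defensive.
Import GRing.Theory.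
Local Open Scope ring_scope.

Definition Rpoly (t : nat) : {poly int} :=
  'X^(8*t+15) + 'X^(8*t+14) + 'X^(8*t+11) - 'X^(8*t+10) - 'X^(8*t+8)
  + 2%:P * 'X^(6*t+9) - 'X^(4*t+15) - 'X^(4*t+11) - 'X^(4*t+9)
  + 2%:P * 'X^(4*t+8) - 2%:P * 'X^(4*t+7) + 'X^(4*t+6) + 'X^(4*t+4)
  + 'X^(4*t) - 2%:P * 'X^(2*t+6) + 'X^7 + 'X^5 - 'X^4 - 'X - 1.

From Stdlib Require Import ZArith.
From mathcomp Require Import all_boot all_order all_algebra all_field.
From mathcomp Require Import ssrZ zify ring.
Set Implicit Arguments. Unset Strict Implicit. Unset Printing Implicit Defensive.
Import GRing.Theory Num.Theory.
Local Open Scope ring_scope.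

(* If Phi_b divides R_t then R_t vanishes at every primitive b-th root of unity w.
   Writing R_t(x) = F(x, x^(2t)) for a fixed integer polynomial F(x, y), this gives
   F(w, w^(2t)) = 0 for all such w, in particular for a second primitive root
   w^j = s w^k (s = +-1, j coprime to b, chosen according to b mod 4), so that also
   F(s w^k, (w^(2t))^k) = 0.  An explicit identity A F(x, y) + B F(s x^k, y^k) = c(x) H(x)
   eliminates y, and since the cofactor c has no primitive b-th roots, H vanishes at
   every primitive b-th root w, hence at w and at w^j = s w^k.  A Bezout identity
   U H(x) + V H(s x^k) = 1 + 7 W(x) then makes -1/7 an algebraic integer.  When 4 | b
   the same scheme runs with H(x) = L(x^2) and the Bezout step is applied to L at w^2;
   the case b = 6 follows from the remainders of F(x, x^(2t)) modulo Phi_6 for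
   t mod 3.  All identities are checked by computation on integer coefficient lists. *)

(* Polynomials are coefficient lists, constant term first; a bivariate polynomial is
   the list of its coefficients in y, each a polynomial in x. *)
Section ListPoly.
Variables (C : Type) (c0 : C) (cadd cmul : C -> C -> C) (copp : C -> C).

Fixpoint lpadd (p q : seq C) : seq C :=
  match p, q with
  | [::], _ => q
  | _, [::] => p
  | a :: p', b :: q' => cadd a b :: lpadd p' q'
  end.

Definition lpscale (c : C) : seq C -> seq C := map (cmul c).

Fixpoint lpmul (p q : seq C) : seq C :=
  if p is a :: p' then lpadd (lpscale a q) (c0 :: lpmul p' q) else [::].

Definition lpopp : seq C -> seq C := map copp.

Fixpoint lpcomp (s : C) (k : nat) (p : seq C) : seq C :=
  if p is a :: p' then a :: nseq k.-1 c0 ++ lpscale s (lpcomp s k p') else [::].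

Variables (R : comNzRingType) (f : C -> R).

Fixpoint leval (p : seq C) (x : R) : R :=
  if p is a :: p' then f a + x * leval p' x else 0.

Lemma leval_cons a p x : leval (a :: p) x = f a + x * leval p x.
Proof. by []. Qed.

Lemma leval_nil x : leval [::] x = 0.
Proof. by []. Qed.

Hypotheses (f0 : f c0 = 0) (fD : forall a b, f (cadd a b) = f a + f b)
  (fM : forall a b, f (cmul a b) = f a * f b) (fN : forall a, f (copp a) = - f a).

Lemma levalD p q x : leval (lpadd p q) x = leval p x + leval q x.
Proof.
elim: p q => [|a p IHp] [|b q] /=; rewrite ?add0r ?addr0 //.
by rewrite fD IHp mulrDr addrACA.
Qed.

Lemma levalZ c p x : leval (lpscale c p) x = f c * leval p x.
Proof. by elim: p => [|a p IHp] /=; rewrite ?mulr0 // fM IHp mulrDr mulrCA. Qed.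

Lemma levalM p q x : leval (lpmul p q) x = leval p x * leval q x.
Proof.
elim: p => [|a p IHp] /=; first by rewrite mul0r.
by rewrite levalD levalZ /= f0 add0r IHp mulrDl mulrA.
Qed.

Lemma levalN p x : leval (lpopp p) x = - leval p x.
Proof. by elim: p => [|a p IHp] /=; rewrite ?oppr0 // fN IHp opprD mulrN. Qed.

Lemma leval_shift n p x : leval (nseq n c0 ++ p) x = x ^+ n * leval p x.
Proof. by elim: n => [|n IHn] /=; rewrite ?mul1r // f0 add0r IHn exprS mulrA. Qed.

Lemma leval_comp s k p x : (0 < k)%N ->
  leval (lpcomp s k p) x = leval p (f s * x ^+ k).
Proof.
case: k => // k _; elim: p => [|a p IHp] //=.
by rewrite leval_shift levalZ IHp exprS; congr (_ + _); ring.
Qed.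

Lemma leval_eq0 (is0 : pred C) p x :
  (forall a, is0 a -> f a = 0) -> all is0 p -> leval p x = 0.
Proof.
by move=> f_is0; elim: p => [|a p IHp] //= /andP[/f_is0 -> /IHp ->]; rewrite mulr0 addr0.
Qed.

End ListPoly.

Lemma leval_map (C D : Type) (R : comNzRingType) (f : D -> R) (g : C -> D) p x :
  leval f (map g p) x = leval (f \o g) p x.
Proof. by elim: p => //= a p ->. Qed.

Lemma eq_leval (C : Type) (R : comNzRingType) (f g : C -> R) : f =1 g -> leval f =2 leval g.
Proof. by move=> fg p x; elim: p => //= a p ->; rewrite fg. Qed.

Definition ZtoR {R : nzRingType} : {rmorphism Z -> R} := (intr \o int_of_Z)%FUN.

Lemma ZtoR0 (R : nzRingType) : ZtoR Z0 = 0 :> R.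
Proof. by []. Qed.

Lemma ZtoR_nat (R : nzRingType) n : ZtoR (Z.of_nat n) = n%:R :> R.
Proof. by rewrite /= (_ : int_of_Z (Z.of_nat n) = n) //; lia. Qed.

Lemma ZtoR_pos (R : nzRingType) p : ZtoR (Zpos p) = (nat_of_pos p)%:R :> R.
Proof. by rewrite -ZtoR_nat (_ : Z.of_nat _ = Zpos p) //; elim: p => //= p IHp; lia. Qed.

Lemma ZtoR_neg (R : nzRingType) p : ZtoR (Zneg p) = - (nat_of_pos p)%:R :> R.
Proof. by rewrite -ZtoR_pos -rmorphN. Qed.

Lemma ZtoR1 (R : nzRingType) : ZtoR (Zpos 1) = 1 :> R.
Proof. exact: rmorph1. Qed.

Lemma ZtoRN1 (R : nzRingType) : ZtoR (Zneg 1) = -1 :> R.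
Proof. exact: rmorphN1. Qed.

Section IntListPoly.
Local Open Scope Z_scope.

Definition zpadd : seq Z -> seq Z -> seq Z := lpadd Z.add.
Definition zpmul : seq Z -> seq Z -> seq Z := lpmul 0 Z.add Z.mul.
Definition zpopp : seq Z -> seq Z := lpopp Z.opp.
Definition zpcomp : Z -> nat -> seq Z -> seq Z := lpcomp 0 Z.mul.
Fixpoint zpexp (p : seq Z) (n : nat) : seq Z :=
  if n is n'.+1 then zpmul p (zpexp p n') else [:: 1].
Definition zpeq0 : pred (seq Z) := all (Z.eqb 0).

Definition bpadd : seq (seq Z) -> seq (seq Z) -> seq (seq Z) := lpadd zpadd.
Definition bpmul : seq (seq Z) -> seq (seq Z) -> seq (seq Z) :=
  lpmul [::] zpadd zpmul.
Definition bpopp : seq (seq Z) -> seq (seq Z) := lpopp zpopp.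
Definition bpeq0 : pred (seq (seq Z)) := all zpeq0.
Definition bptwist (s : Z) (k : nat) (F : seq (seq Z)) : seq (seq Z) :=
  lpcomp [::] zpmul [:: 1] k (map (zpcomp s k) F).
Definition bpdiag (k : nat) (F : seq (seq Z)) : seq Z :=
  foldr (fun p G => zpadd p (nseq k 0 ++ G)) [::] F.

End IntListPoly.

Section IntListPolyEval.
Variable R : comNzRingType.
Implicit Types (x y : R) (p q : seq Z) (F G : seq (seq Z)).

Definition zpeval p x : R := leval ZtoR p x.
Definition bpeval F x y : R := leval (zpeval ^~ x) F y.

Lemma zpevalD p q x : zpeval (zpadd p q) x = zpeval p x + zpeval q x.
Proof. by apply: levalD => a b; exact: rmorphD. Qed.

Lemma zpevalM p q x : zpeval (zpmul p q) x = zpeval p x * zpeval q x.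
Proof. by apply: levalM => [|a b|a b]; rewrite ?rmorph0 ?rmorphD ?rmorphM. Qed.

Lemma zpevalN p x : zpeval (zpopp p) x = - zpeval p x.
Proof. by apply: levalN => a; exact: rmorphN. Qed.

Lemma zpeval_comp s k p x : (0 < k)%N -> zpeval (zpcomp s k p) x = zpeval p (ZtoR s * x ^+ k).
Proof. by apply: leval_comp => [|a b]; rewrite ?rmorph0 ?rmorphM. Qed.

Lemma zpevalX p n x : zpeval (zpexp p n) x = zpeval p x ^+ n.
Proof.
elim: n => [|n IHn]; last by rewrite zpevalM IHn exprS.
by rewrite /zpeval /= mulr0 addr0.
Qed.

Lemma zpeval_eq0 p x : zpeq0 p -> zpeval p x = 0.
Proof. by apply: leval_eq0 => a /Z.eqb_spec <-. Qed.

Lemma zpevalC a x : zpeval [:: a] x = ZtoR a.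
Proof. by rewrite /zpeval /= mulr0 addr0. Qed.

Lemma bpevalD F G x y : bpeval (bpadd F G) x y = bpeval F x y + bpeval G x y.
Proof. by apply: levalD => p q; exact: zpevalD. Qed.

Lemma bpevalM F G x y : bpeval (bpmul F G) x y = bpeval F x y * bpeval G x y.
Proof. by apply: levalM => [|p q|p q]; rewrite ?zpevalD ?zpevalM. Qed.

Lemma bpevalN F x y : bpeval (bpopp F) x y = - bpeval F x y.
Proof. by apply: levalN => p; exact: zpevalN. Qed.

Lemma bpeval_twist s k F x y : (0 < k)%N ->
  bpeval (bptwist s k F) x y = bpeval F (ZtoR s * x ^+ k) (y ^+ k).
Proof.
move=> k_gt0; rewrite /bpeval leval_comp //; last by move=> p q; exact: zpevalM.
rewrite leval_map /zpeval /= mulr0 addr0 rmorph1 mul1r.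
by apply: eq_leval => p; exact: zpeval_comp.
Qed.

Lemma bpeval_eq0 F x y : bpeq0 F -> bpeval F x y = 0.
Proof. by apply: leval_eq0 => p; exact: zpeval_eq0. Qed.

Lemma bpeval_diag k F x : zpeval (bpdiag k F) x = bpeval F x (x ^+ k).
Proof.
by elim: F => [|p F IHF] //=; rewrite zpevalD /zpeval leval_shift // -IHF.
Qed.

End IntListPolyEval.

Section Certificates.
Implicit Types (F A B : seq (seq Z)) (c H P D Q Rm U V W : seq Z).

Definition elim_cert F A B (s : Z) (k : nat) c H : bool :=
  bpeq0 (bpadd (bpadd (bpmul A F) (bpmul B (bptwist s k F))) (bpopp [:: zpmul c H])).

Lemma elim_cert_sound (R : comNzRingType) F A B s k c H (x y : R) :
  elim_cert F A B s k c H -> (0 < k)%N ->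
  bpeval F x y = 0 -> bpeval F (ZtoR s * x ^+ k) (y ^+ k) = 0 ->
  zpeval c x * zpeval H x = 0.
Proof.
move=> /(bpeval_eq0 x y) + k_gt0 Fxy Fsxy.
rewrite !bpevalD !bpevalM bpevalN bpeval_twist // Fxy Fsxy !mulr0 !add0r.
by rewrite /bpeval /= mulr0 addr0 zpevalM => /eqP; rewrite oppr_eq0 => /eqP.
Qed.

Definition bezout_cert (m : nat) U V W H (s : Z) (k : nat) : bool :=
  zpeq0 (zpadd (zpadd (zpmul U H) (zpmul V (zpcomp s k H)))
               (zpopp (zpadd [:: Zpos 1] (zpmul [:: Z.of_nat m] W)))).

Lemma Aint_zpeval p (x : algC) : x \in Aint -> zpeval p x \in Aint.
Proof.
move=> Ax; elim: p => [|a p IHp] /=; first exact: rpred0.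
by rewrite rpredD ?rpredM // Aint_int.
Qed.

Lemma Aint_add1_natmul_neq0 m (w : algC) : (1 < m)%N -> w \in Aint ->
  1 + m%:R * w != 0.
Proof.
move=> m_gt1 Aw; apply/eqP => mw1.
have m_neq0 : m%:R != 0 :> algC by rewrite pnatr_eq0 -lt0n ltnW.
have w_rat : w \in Crat.
  rewrite -[w](mulKf m_neq0) -[_ * w](addKr 1) mw1 addr0.
  by rewrite rpredM ?rpredN ?rpredV ?rpred1 ?rpred_nat.
have /intrP[n def_w] := Cint_rat_Aint w_rat Aw.
move/eqP: mw1; rewrite def_w -(intrM _ m) -(intrD _ 1) intr_eq0 => /eqP.
by case: n {def_w} => n; rewrite ?NegzE; nia.
Qed.

Lemma bezout_cert_sound m U V W H s k (x : algC) :
  bezout_cert m U V W H s k -> (1 < m)%N -> (0 < k)%N -> x \in Aint ->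
  zpeval H x = 0 -> zpeval H (ZtoR s * x ^+ k) = 0 -> False.
Proof.
move=> /(zpeval_eq0 x) + m_gt1 k_gt0 Ax Hx Hsx.
rewrite !zpevalD !zpevalM zpeval_comp // Hx Hsx !mulr0 !add0r zpevalN zpevalD zpevalM.
rewrite !zpevalC ZtoR1 ZtoR_nat => /eqP; rewrite oppr_eq0.
by apply/negP/Aint_add1_natmul_neq0/Aint_zpeval.
Qed.

Definition div_cert P D Q Rm : bool := zpeq0 (zpadd P (zpopp (zpadd (zpmul Q D) Rm))).

Lemma div_cert_sound (R : comNzRingType) P D Q Rm (x : R) :
  div_cert P D Q Rm -> zpeval P x = zpeval Q x * zpeval D x + zpeval Rm x.
Proof.
move/(zpeval_eq0 x); rewrite zpevalD zpevalN zpevalD zpevalM.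
by move/eqP; rewrite subr_eq0 => /eqP.
Qed.

End Certificates.

Lemma coprime_odd_dvd_add_pow2 k n e : odd k -> (k %| n + 2 ^ e)%N -> coprime k n.
Proof.
move=> k_odd k_dvd; rewrite /coprime -dvdn1.
have k2e : coprime k (2 ^ e) by rewrite coprimeXr // coprimen2.
rewrite -(eqP k2e) dvdn_gcd dvdn_gcdl /= -(dvdn_addr _ (dvdn_gcdr k n)).
exact: dvdn_trans (dvdn_gcdl k n) k_dvd.
Qed.

Section PrimitiveRoot.
Variables (R : idomainType) (n : nat) (w : R).
Hypotheses (n_gt2 : (2 < n)%N) (w_prim : n.-primitive_root w).

Lemma prim_root_neq0 : w != 0.
Proof. by rewrite (prim_root_eq0 w_prim) -lt0n ltnW // ltnW. Qed.

Lemma prim_root_neq1 : w != 1.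
Proof.
by rewrite -[w]expr1 -(expr0 w) (eq_prim_root_expr w_prim) mod0n modn_small // ltnW.
Qed.

Lemma prim_root_neqN1 : w != -1.
Proof.
apply/eqP => wN1; have := prim_order_dvd w_prim 2.
by rewrite wN1 sqrrN expr1n eqxx => /dvdn_leq; lia.
Qed.

Lemma prim_expr_half h : n = (2 * h)%N -> w ^+ h = -1.
Proof.
move=> n2h; have wh_neq1 : w ^+ h != 1.
  by rewrite -(prim_order_dvd w_prim) n2h; apply/negP => /dvdn_leq; lia.
have : (w ^+ h - 1) * (w ^+ h + 1) = 0.
  by rewrite -subr_sqr expr1n -exprM mulnC -n2h prim_expr_order // subrr.
by move/eqP; rewrite mulf_eq0 subr_eq0 (negPf wh_neq1) addr_eq0 => /eqP.
Qed.

End PrimitiveRoot.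

Lemma prim_root_Phi6_eq0 (R : numDomainType) n (w : R) :
  (2 < n)%N -> n.-primitive_root w -> (w ^+ 2 - w + 1 == 0) = (n == 6%N).
Proof.
move=> n_gt2 w_prim; have w3 : w ^+ 3 + 1 = (w + 1) * (w ^+ 2 - w + 1) by ring.
apply/eqP/eqP => [Phi6w | n6].
  have w3N1 : w ^+ 3 = -1 by apply/eqP; rewrite -addr_eq0 w3 Phi6w mulr0.
  have : (n %| 6)%N by rewrite (prim_order_dvd w_prim) (exprM w 3 2) w3N1 sqrrN expr1n.
  have : ~~ (n %| 3)%N.
    by rewrite (prim_order_dvd w_prim) w3N1 eq_sym -addr_eq0 -mulr2n pnatr_eq0.
  by case: n {w_prim w3} n_gt2 => [|[|[|[|[|[|[|[|]]]]]]]].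
have : (w + 1) * (w ^+ 2 - w + 1) = 0.
  by rewrite -w3 (prim_expr_half n_gt2 w_prim (_ : n = 2 * 3)%N) ?n6 // addNr.
by move/eqP; rewrite mulf_eq0 addr_eq0 (negPf (prim_root_neqN1 n_gt2 w_prim)) => /eqP.
Qed.

Section Rbivariate.
Local Open Scope Z_scope.

Definition Rbiv : seq (seq Z) :=
  [:: [:: -1; -1; 0; 0; -1; 1; 0; 1];
      [:: 0; 0; 0; 0; 0; 0; -2];
      [:: 1; 0; 0; 0; 1; 0; 1; -2; 2; -1; 0; -1; 0; 0; 0; -1];
      [:: 0; 0; 0; 0; 0; 0; 0; 0; 0; 2];
      [:: 0; 0; 0; 0; 0; 0; 0; 0; -1; 0; -1; 1; 0; 0; 1; 1]].

End Rbivariate.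

Lemma horner_Rpoly (R : comNzRingType) t (x : R) :
  (map_poly intr (Rpoly t)).[x] = bpeval Rbiv x (x ^+ (2 * t)).
Proof.
have cx : commr_rmorph (intr : int -> R) x by move=> a; exact: mulrC.
have xE k c : x ^+ (k * t + c) = (x ^+ t) ^+ k * x ^+ c by rewrite exprD mulnC exprM.
have xE0 k : x ^+ (k * t) = (x ^+ t) ^+ k by rewrite mulnC exprM.
rewrite /bpeval /zpeval /Rbiv !leval_cons !leval_nil !ZtoR_pos !ZtoR_neg !ZtoR0.
rewrite -[LHS]/(horner_morph cx (Rpoly t)) /Rpoly.
rewrite !(rmorphD, rmorphB, rmorphN, rmorphM, rmorph1, rmorphXn) /= horner_morphX !xE !xE0.
ring.
Qed.

Lemma root_dvd_Cyclotomic (p : {poly int}) n (w : algC) :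
  'Phi_n %| p -> n.-primitive_root w -> root (map_poly intr p) w.
Proof.
rewrite (Pdiv.IdomainMonic.dvdp_eq (Cyclotomic_monic n)) => /eqP-> w_prim.
by rewrite rmorphM /= rootM (Cintr_Cyclotomic w_prim) root_cyclotomic // w_prim orbT.
Qed.

Lemma Rbiv_prim_root t b : 'Phi_b %| Rpoly t ->
  forall w : algC, b.-primitive_root w -> bpeval Rbiv w (w ^+ (2 * t)) = 0.
Proof.
by move=> Phi_dvd w w_prim; rewrite -horner_Rpoly; apply/eqP/(root_dvd_Cyclotomic Phi_dvd).
Qed.

Section Cofactor.
Local Open Scope Z_scope.

Definition cofactor (a b c d : nat) : seq Z :=
  zpmul (zpexp [:: 0; 1] a)
    (zpmul (zpexp [:: -1; 1] b) (zpmul (zpexp [:: 1; 1] c) (zpexp [:: 1; -1; 1] d))).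

End Cofactor.

Lemma zpeval_cofactor (R : comNzRingType) a b c d (x : R) :
  zpeval (cofactor a b c d) x =
  x ^+ a * ((x - 1) ^+ b * ((x + 1) ^+ c * (x ^+ 2 - x + 1) ^+ d)).
Proof.
rewrite !(zpevalM, zpevalX) /zpeval !leval_cons !leval_nil ZtoR0 !ZtoR_neg !ZtoR_pos.
by congr (_ ^+ _ * (_ ^+ _ * (_ ^+ _ * _ ^+ _))) => /=; ring.
Qed.

Lemma cofactor_prim_neq0 a b c d n (w : algC) :
  (2 < n)%N -> n != 6%N -> n.-primitive_root w -> zpeval (cofactor a b c d) w != 0.
Proof.
move=> n_gt2 n_neq6 w_prim.
rewrite zpeval_cofactor !mulf_neq0 ?expf_neq0 ?(prim_root_neq0 n_gt2 w_prim) //.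
- by rewrite subr_eq0 (prim_root_neq1 n_gt2 w_prim).
- by rewrite addr_eq0 (prim_root_neqN1 n_gt2 w_prim).
by rewrite (prim_root_Phi6_eq0 n_gt2 w_prim).
Qed.

Section CertificateData.
Local Open Scope Z_scope.

Definition A_odd : seq (seq Z) :=
  [:: nseq 37 0 ++ [:: -1; 1; 3; 1; -2; -1; -2; -6; -25; -10; 45; 29; 43; 11; 95; -68; -100;
        -416; 209; -387; 526; -418; 1409; -500; 1347; -2506; 2137; -3943; 2906; -4854; 5991;
        -3744; 7930; -7393; 9622; -11608; 9038; -15240; 10325; -10266; 14394; -9820; 16072;
        -10987; 13237; -14300; -265; -4436; -1203; 7461; -12673; 20626; -13749; 33510; -52449;
        48695; -55035; 73060; -92246; 82620; -72340; 106604; -123188; 89615; -72189; 99539;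
        -107816; 54578; -31686; 86277; -81148; -5889; 25618; 22977; -6883; -87071; 75829; 21589;
        5080; -81580; 53653; 20909; 15756; -87655; 9865; 81761; -48706; 14063; -72321; 129610;
        -74713; 31222; -90273; 115959; -68986; 39822; -71800; 77365; -15763; -17793; 339; -9414;
        52506; -63560; 49193; -49112; 73925; -77637; 55638; -61014; 66245; -56799; 44611;
        -32507; 36505; -24129; 10190; -13904; 6239; -5987; -801; 4726; -461; 9818; -7315; 7130;
        -7938; 4361; -7595; 3991; -4109; 5334; -2637; 3621; -1768; 1468; -1583; 135; -960; 406;
        -264; 382; 102; 162; 81; -94; -46; -67; -16; -24; 26; 2; 33; -4; 4; -5; -1; -3; 0; -1;
        1];
      nseq 42 0 ++ [:: 2; -2; -4; -8; 6; 10; -2; 4; 30; 44; -48; -78; -122; 144; -294; 180;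
        -234; 938; -504; 720; -1288; 2132; -2878; 2028; -3782; 5600; -4540; 5062; -6618; 10710;
        -10642; 7804; -14178; 15778; -12970; 9588; -13344; 22066; -12966; 7996; -16402; 19014;
        -5406; -10598; 50; 7890; 18384; -33254; 18352; -14542; 53468; -82082; 54036; -49338;
        97330; -120088; 75918; -64156; 126060; -140914; 74600; -54566; 121656; -116336; 17190;
        -1474; 81964; -67550; -43908; 48322; 42172; -11462; -99668; 73148; 28748; 6282; -103458;
        42760; 69298; -33236; -47904; -19808; 116874; -67448; 11874; -83884; 156206; -93714;
        31148; -86224; 119080; -44956; -6832; -30766; 44570; 24300; -64786; 36116; -35742;
        85108; -104038; 73180; -69790; 94300; -97728; 70944; -60648; 75500; -61884; 40708;
        -30682; 29840; -24580; 4418; -1476; 890; 8812; -13108; 18408; -15618; 16988; -21642;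
        17178; -18028; 16644; -15442; 14936; -10844; 11122; -9280; 7142; -6842; 4962; -4616;
        3448; -2410; 2424; -1450; 1266; -970; 638; -618; 282; -274; 212; -92; 100; -44; 44; -32;
        4; -16; 4; -2; 2; 0; 2];
      nseq 37 0 ++ [:: -1; 2; 1; 0; -2; -1; 2; -4; -19; 4; 38; -17; 48; -62; 171; -151; 38;
        -351; 487; -657; 742; -1122; 1895; -1452; 1694; -2603; 3546; -4237; 4080; -6575; 8113;
        -7159; 7099; -9032; 12315; -11297; 10925; -16498; 19314; -14497; 10580; -14060; 16966;
        -9091; 4089; -13892; 15743; -759; -11631; 6140; -4054; 27869; -39101; 18915; -13318;
        41107; -57432; 36366; -34965; 78596; -91477; 54881; -49159; 93787; -107824; 69825;
        -69245; 129804; -145444; 93329; -88395; 143664; -148395; 79982; -65086; 135520; -136532;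
        57966; -48333; 109156; -103598; 17246; -9833; 82606; -72512; 5623; -17814; 91514;
        -94864; 31134; -41853; 110569; -113024; 66197; -71502; 131165; -136333; 83030; -78581;
        117173; -109610; 53270; -35950; 65430; -52493; 442; 15090; 3820; 5375; -48565; 59449;
        -41206; 48737; -70845; 72051; -50112; 45773; -59351; 51101; -35646; 32307; -35410;
        30042; -13653; 10554; -11944; 4931; -438; -1370; -832; -793; 5388; -3724; 3686; -4503;
        4146; -3777; 1587; -1869; 2079; -823; 1226; -826; 675; -383; -227; -157; -124; 153; 22;
        81; 15; 118; -106; 23; -86; 30; -16; 9; -2; 26; -4; 5; -6; 0; -1; -1; -1; 1];
      nseq 42 0 ++ [:: 2; -2; -6; -4; 8; 10; -2; -10; 38; 40; -76; -76; -66; 152; -182; 12; -64;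
        870; -626; 406; -1092; 1976; -2166; 930; -2472; 5486; -4368; 3496; -6174; 10506; -9236;
        4106; -10942; 18494; -13222; 8228; -15940; 28044; -17278; 1224; -18688; 32368; -13050;
        -7320; -9902; 36158; 4484; -40786; 3016; 24140; 23790; -75418; 21732; 25774; 62168;
        -119820; 35602; 19734; 80698; -158590; 37526; 23454; 135068; -211310; 63018; 14666;
        159864; -237236; 39144; 18656; 210336; -274932; 46136; 20986; 212226; -244338; -28132;
        50772; 211554; -228808; -21570; 25092; 212676; -171436; -80362; 27172; 206888; -171248;
        -19900; -39094; 229886; -150390; -15460; -53514; 189006; -127892; 8018; -71842; 159656;
        -68728; -31276; -6448; 48146; 15940; -83326; 45734; -22752; 79664; -113082; 90536;
        -75976; 101922; -115036; 84568; -69032; 79174; -70016; 50952; -35172; 35670; -30670;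
        10462; -5446; 1764; 5146; -11244; 16836; -14166; 16082; -19066; 16158; -16720; 15350;
        -15072; 14420; -11028; 10816; -8810; 6974; -6320; 4854; -4606; 3500; -2556; 2326; -1418;
        1184; -886; 638; -620; 320; -274; 188; -86; 88; -38; 46; -34; 6; -14; 2; -2; 2; 0; 2];
      nseq 53 0 ++ [:: 1; -1; -5; 3; 5; 0; -6; 3; 34; 5; -75; -20; 58; -45; -48; -132; 403; 104;
        -87; -259; 583; -447; -31; -1536; 1374; -114; 29; -289; 1981; 138; 241; -3364; 2272;
        -1498; -1825; -1290; 3975; -1030; 6409; -11243; 17368; -17090; 14836; -23500; 25800;
        -29507; 35815; -42755; 54042; -52251; 45410; -39388; 32963; -28812; 11941; -236; 5113;
        3932; -34016; 62732; -73659; 88856; -132226; 154089; -134102; 136938; -166711; 180962;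
        -160935; 156878; -196408; 189030; -144092; 131502; -142092; 129808; -82399; 82891;
        -114036; 91945; -58025; 59577; -79759; 68022; -41656; 64111; -86328; 72474; -59746;
        68865; -79868; 63450; -52210; 62396; -63235; 45987; -32623; 29519; -21437; 6814; 2668;
        -1350; 5115; -13979; 17025; -18993; 20829; -23623; 23441; -18098; 17645; -15824; 13243;
        -12475; 9714; -9907; 6895; -4903; 4326; -2180; 2277; -1110; 1094; -980; 129; -339; -75;
        89; -70; 167; 36; 79; -62; 25; -66; 15; -37; 11; -1; 10; -1; 4; -1; 1; -1];
      nseq 58 0 ++ [:: -2; 2; 8; 4; -20; -16; 24; 22; -42; -86; 124; 158; -40; -328; 228; 216;
        46; -1090; 450; 728; 200; -1934; 912; 1352; 1046; -4568; 1414; 3534; 492; -6572; 172;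
        7700; 1098; -9958; -3844; 20468; -7984; -2112; -23572; 43924; -23788; 6800; -48830;
        82356; -48330; 31396; -83230; 112370; -44996; 2762; -73604; 92888; 6620; -48062; -29518;
        30338; 120618; -165414; 62540; -83564; 228222; -229724; 100716; -134792; 287190;
        -254800; 122372; -162740; 257540; -171726; 38454; -86052; 171348; -94378; 9554; -67964;
        116124; -41854; -15096; -42274; 93158; -51472; 41466; -99888; 126594; -95188; 76222;
        -109420; 116936; -88052; 82996; -95752; 91112; -60964; 43728; -43234; 26186; -7172;
        -3354; 6592; -14724; 28502; -30748; 33742; -36524; 39170; -38888; 34312; -34370; 31074;
        -27642; 24576; -21146; 19584; -15430; 13168; -11002; 8400; -7062; 5080; -4396; 3330;
        -2342; 1932; -1260; 992; -648; 434; -386; 204; -148; 104; -52; 52; -12; 18; -10; 2; -4;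
        0; -2];
      nseq 53 0 ++ [:: 1; -2; -1; 0; 3; -1; -4; 6; 21; -1; -41; 20; -32; 59; -221; 163; -75;
        400; -557; 708; -612; 1278; -2013; 1520; -1844; 2559; -3742; 3470; -3314; 5923; -6761;
        6199; -5105; 7309; -9128; 6240; -5755; 9068; -11697; 6009; -1901; 4264; -2827; -7262;
        14442; -10423; 13221; -27303; 38370; -39058; 46869; -66626; 79371; -74663; 72016;
        -83494; 87119; -73929; 62098; -70364; 70582; -41773; 14820; -9832; -5154; 45167; -77171;
        73575; -72296; 101831; -116230; 108408; -106978; 130243; -140754; 111605; -90049; 92930;
        -83330; 51723; -31127; 43748; -51036; 21852; -6476; 13008; -11711; -7110; 13302; 11695;
        -21337; 9626; -10470; 25593; -30584; 21538; -22743; 37932; -39307; 31612; -30238; 34581;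
        -32670; 22235; -20880; 20959; -16898; 8932; -4187; 4223; 1202; -4896; 5610; -5877; 6055;
        -8593; 8153; -7225; 8107; -6362; 5638; -3953; 2871; -3250; 1716; -1900; 1370; -674; 590;
        203; 61; 85; -199; -39; -146; 79; -132; 179; -54; 99; -40; 16; -33; 6; -31; 10; -5; 7;
        1; 2; 0; 1; -1];
      nseq 58 0 ++ [:: -2; 2; 6; 4; -10; -8; 10; 12; -50; -56; 80; 92; 40; -198; 272; 86; 130;
        -1024; 632; -392; 1054; -2534; 2244; -802; 2876; -5556; 4350; -2534; 5710; -10562; 7782;
        -2158; 8776; -15476; 8872; -1260; 9732; -21426; 6446; 9446; 4892; -15486; -8682; 32460;
        -14284; -2002; -42262; 77376; -47908; 34094; -87870; 127616; -73996; 43344; -115776;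
        141640; -59546; 21364; -90960; 97176; 28416; -69594; -16300; 164; 125062; -144320;
        52608; -76556; 200562; -183598; 81514; -102338; 175832; -124048; 21182; -44598; 109524;
        -53600; -26896; 9994; 19516; 28402; -80050; 43086; -224; 24586; -39404; 3284; 29414;
        -18942; 13674; -50740; 75968; -70938; 75232; -91964; 99966; -85540; 75166; -78462;
        69506; -55566; 45040; -37668; 29740; -14150; 4622; 162; -10126; 15308; -20978; 22610;
        -22808; 26492; -23648; 24176; -23504; 21454; -20984; 17010; -15460; 13218; -10468; 9650;
        -7608; 6614; -5398; 3784; -3308; 2196; -1732; 1424; -946; 864; -502; 356; -270; 124;
        -130; 72; -52; 48; -8; 16; -4; 2; -4; 0; -2]].

Definition B_odd : seq (seq Z) :=
  [:: nseq 37 0 ++ [:: 1; -2; -1; 0; 3; -1; -2; 0; 24; -3; -35; 25; -35; 55; -214; 144; -113;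
        484; -781; 1089; -993; 1978; -2924; 2585; -3500; 4996; -7680; 7741; -8326; 13148;
        -14468; 14847; -14474; 20903; -26068; 21389; -23472; 30061; -34086; 23237; -18435;
        30422; -29146; 10280; -1920; 16327; -7993; -26910; 41885; -26995; 41360; -93935; 105786;
        -81183; 94845; -150728; 159107; -109304; 127833; -199504; 186572; -113228; 107987;
        -173050; 128789; -25595; 64624; -151217; 110746; -8960; 52615; -133208; 42086; 52099;
        25556; -108878; 46157; 9394; 83597; -130627; 19076; 38762; 26665; -63021; -4813; 29603;
        39493; -47968; -22237; 48020; -7444; -2438; -39289; 43088; 7068; -20987; -1762; 1802;
        30469; -41190; 21568; -26126; 48780; -52995; 37354; -36585; 46464; -44026; 31901;
        -28278; 32097; -26564; 17955; -16181; 18477; -16786; 12197; -10340; 10831; -7430; 5277;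
        -5475; 5713; -5643; 3647; -3822; 3002; -1872; 1766; -1415; 1695; -1164; 879; -883; 455;
        -342; 239; -253; 251; -93; 129; -80; 28; -21; 9; -31; 8; -5; 7; -1; 1; 1; 1; -1];
      nseq 42 0 ++ [:: -2; 2; 6; 4; -8; -12; 4; 20; -40; -54; 60; 88; 80; -196; 130; 150; 198;
        -890; 452; -494; 1432; -2564; 1682; -1262; 4010; -6046; 5498; -5536; 11036; -14408;
        10720; -10312; 18546; -24726; 19790; -19274; 36018; -40512; 26240; -22046; 39080;
        -48856; 21364; -21450; 52114; -50420; 10952; 11418; 28138; -18532; -49344; 56262;
        -12088; 24740; -123946; 146124; -75756; 117526; -231422; 228060; -139152; 176930;
        -311454; 267102; -145834; 201646; -307292; 226370; -94714; 170162; -271562; 155482;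
        -27688; 103052; -159256; 37616; 43070; 64090; -134354; 28812; 10376; 92924; -132662;
        60812; -52914; 161678; -203112; 147990; -165564; 237864; -247942; 195434; -185562;
        224234; -198604; 146664; -135112; 139558; -110820; 60148; -41836; 32890; 910; -32614;
        43466; -49408; 62686; -77778; 76592; -76862; 83444; -83600; 79846; -71758; 68060;
        -61812; 52628; -47482; 42228; -37402; 31156; -25518; 21608; -16680; 13302; -10784; 8752;
        -7076; 5066; -4008; 2860; -1970; 1478; -1062; 888; -560; 372; -276; 144; -102; 60; -52;
        42; -10; 14; -4; 2; -2; 0; -2];
      nseq 45 0 ++ [:: -1; 2; 0; 3; -3; -2; -3; 0; -6; 3; 9; -14; 89; -95; 184; -324; 390; -539;
        762; -1325; 1736; -2211; 3312; -4358; 5366; -5948; 8007; -10547; 11888; -14505; 17484;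
        -23098; 23923; -25187; 31460; -35145; 39157; -37531; 48174; -56117; 50789; -50044;
        51041; -57459; 41704; -26296; 34098; -29358; 2013; 30574; -38993; 53483; -115976;
        162735; -159926; 174616; -231999; 271907; -248206; 255273; -332624; 349962; -292006;
        278796; -315741; 287100; -186977; 174242; -233109; 190958; -111730; 108876; -136447;
        76930; 12534; 24353; -73355; 40055; -13621; 54386; -94957; 52352; -30083; 84457;
        -109773; 90325; -89120; 126229; -137102; 99232; -91776; 106222; -94605; 64926; -54666;
        59331; -40401; 12833; -4152; 3109; 12463; -26515; 28120; -27767; 34092; -39711; 35471;
        -32051; 32996; -31716; 26820; -23453; 21502; -19408; 14691; -11813; 10914; -8124; 6619;
        -4900; 4156; -3220; 1792; -1716; 1159; -755; 577; -314; 360; -136; 40; -119; 7; -19; -2;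
        -7; 23; 19; 4; -1; -4; 0; -2; -2; 0; 1];
      nseq 50 0 ++ [:: 2; -2; -4; -8; 4; 12; 8; -8; 32; 44; -28; -84; -196; 154; -200; 164;
        -408; 1148; -528; 1382; -2388; 2968; -3350; 3222; -6410; 7326; -6800; 9550; -13454;
        16096; -14498; 16056; -24588; 25036; -21324; 26890; -36530; 38750; -27294; 30034;
        -44416; 33884; -15480; 17092; -29464; 13994; 28496; -31534; 20130; -61216; 109546;
        -111592; 88352; -130116; 197544; -171442; 141140; -189424; 235606; -184952; 116506;
        -167446; 202364; -117616; 69046; -125142; 148124; -46628; -11382; -56714; 64262; 14350;
        -21038; -58360; 67880; 5316; -128; -71492; 74520; -30532; 55664; -115242; 113686;
        -79372; 90260; -123924; 101044; -69090; 74106; -82334; 66666; -33400; 33720; -33298;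
        7548; 5794; -14512; 12272; -24392; 36892; -28708; 34560; -34354; 36812; -36018; 29196;
        -34072; 27912; -24472; 22206; -17512; 17994; -13134; 11862; -10920; 7290; -6776; 4494;
        -3838; 3396; -1946; 2230; -1312; 920; -774; 316; -482; 214; -164; 192; -40; 70; -12; 14;
        -34; -6; -14; 2; 0; 2; 2; 2]].

Definition H_odd : seq Z :=
  [:: 2; 4; 6; 0; -18; -64; -138; -244; -316; -304; -130; 268; 788; 1400; 1480; 1008; -1092;
    -3652; -8240; -10864; -14742; -11780; -10636; 1208; 4392; 20564; 15322; 29880; 10806; 33224;
    16078; 75004; 80212; 193452; 213370; 358304; 339054; 458620; 347130; 412100; 200192; 228068;
    -39942; -5044; -297084; -262520; -568294; -553052; -862308; -884188; -1119482; -1115368;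
    -1173866; -1125516; -923056; -814676; -345680; -286320; 407930; 367288; 1206904; 927112;
    1815832; 1296576; 2147842; 1298464; 2053586; 989684; 1654534; 354412; 907024; -445852;
    48898; -1376964; -924252; -2204392; -1597046; -2727280; -1921864; -2727280; -1597046;
    -2204392; -924252; -1376964; 48898; -445852; 907024; 354412; 1654534; 989684; 2053586;
    1298464; 2147842; 1296576; 1815832; 927112; 1206904; 367288; 407930; -286320; -345680;
    -814676; -923056; -1125516; -1173866; -1115368; -1119482; -884188; -862308; -553052;
    -568294; -262520; -297084; -5044; -39942; 228068; 200192; 412100; 347130; 458620; 339054;
    358304; 213370; 193452; 80212; 75004; 16078; 33224; 10806; 29880; 15322; 20564; 4392; 1208;
    -10636; -11780; -14742; -10864; -8240; -3652; -1092; 1008; 1480; 1400; 788; 268; -130; -304;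
    -316; -244; -138; -64; -18; 0; 6; 4; 2].

Definition U_odd : seq Z :=
  [:: 2; -2; -2; -2; 3; -2; 0; 3; 2; 2; 3; 2; 1; 3; 1; 1; -1; -2; 3; 3; -3; 3; 0; -2; -2; -1;
    -2; 0; 3; -2; -3; 1; -2; 3; -3; -2; 2; 1; 0; 3; 2; -3; -3; 0; 0; -1; 2; 2; 1; 2; -1; 3; 2;
    2; -1; 2; 2; -2; 3; -3; -3; 3; 0; -1; -2; -1; 0; -1; -3; -1; -3; -1; 3; 3; 0; -2; 0; -1; 0;
    -2; 1; -2; 3; 3; 1; -3; -2; 1; -1; -2; -2; 0; 0; -2; -3; 1; 1; 2; 3; 0; -2; 2; 1; 1; 2; 0;
    3; -1; -2; 0; -2; 3; -2; -1; 3; 2; 3; 3; 1; -2; 2; -3; -3; 3; 0; 1; -1; 0; -2; -2; 2; -3;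
    -2; 0; -2; 0; -2; -3; -2; -2; 3; 2; 2; 3; 1; 2; -2; 0; 1; 3; 2; 0; 0; 1; 0; 0; 0; -2; 0; -1;
    2; 2; 1; 3; 1; -2; -2; 2; -3; 3; 3; -2; 0; 2; 3; -3; 0; 2; 3; 2; 0; 1; 3; -2; -3; 2; -2; 2;
    -1; 0; 3; -3; 1; 3; -3; -1; 3; -2; 0; -3; 1; 1; 0; -2; 0; 1; -2; 1; 1; -2; 0; -2; -3; 3; -1;
    2; 0; 2; 2; -3; 0; 1; 3; 1; 2; -3; 0; 3; 1; 0; 1; -1; -2; 3; 2; -2; 2; 0; -3; 3; -3; 2; 2;
    0; 0; 3; 1; 0; -1; 0; 2; 3; 1; 1; -3; 3; -3; -3; -2; 0; -2; -3; 0; -1; 2; -2; 1; 2; -1; -1;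
    1; -1; 3; -1; 3; 2; -2; -2; -2; 0; 1; 1; -3; -1; 0; -1; -3; -1; 1; -1; 3; 1; 1; 2; 2; 2; 2;
    3; -2; 2; 0; -3; 1; 0; -3; 0; 3; 1; 0; 0; 2; 2].

Definition V_odd : seq Z :=
  [:: 2; -2; 3; 2; -1; 1; 2; -2; -3; 2; -2; -2; -1; 3; 0; -2; -2; 0; -3; -3; -3; 2; 2; -1; 2; 3;
    3; -1; 3; 1; 1; -2; 3; -1; -1; 3; 0; 2; 0; -1; -2; 2; -2; 3; 1; 1; 3; 0; -2; 3; -3; -3; -1;
    1; 3; 0; 1; -2; 0; -3; 1; 3; -2; 2; -1; -2; 1; 1; -2; 1; -1; 0; -1; 2; -2; 3; 1; 3; -3; 1;
    -3; 0; -2; 3; 3; 0; -2; -1; 3; -1; 1; 0; -2; 1; -2; 3; -1; 1; 0; 1; -3; 1; 1; -3; 2; -2; 1;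
    2; 3; 3; 3; -2; 1; -3; 1; -1; 2; -2; -2; 3; 0; 3; -3; -1; 1; -1; -1; 0; -2; 2; 3; 3; 1; -3;
    -2; 1; -3; 1; 2; -3; -3; 2; -3; -3; -1; -1; 0; 2; 3; 1; -1; 0; -1; 1; 1; -2].

Definition W_odd : seq Z :=
  [:: 1; 0; 2; -4; -4; -14; -12; -6; 26; 100; 146; 234; 110; 36; -542; -856; -1718; -1446;
    -1514; 652; 2004; 6116; 6748; 9542; 4246; 2850; -10720; -12348; -29486; -19020; -32936;
    -2528; -21208; 20440; -25820; 12888; -76628; -30034; -136452; -31594; -101912; 107412;
    104288; 408342; 432094; 742098; 720184; 947476; 837922; 928068; 763662; 729198; 552006;
    348642; 167614; -247358; -448730; -1155610; -1317070; -2201204; -2153382; -3105878;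
    -2644786; -3428044; -2436826; -3086240; -1592592; -2011522; -120240; -511178; 1604082;
    1349854; 3473362; 3010440; 4818416; 4258844; 5504868; 4455446; 4955642; 3820202; 3607548;
    2098424; 1232964; -18674; -1321284; -2624816; -4070030; -4554130; -5825238; -5914548;
    -6730850; -5633548; -6096590; -4789222; -4836492; -2605558; -2666516; -733314; -677414;
    1880884; 1413920; 3142890; 2505592; 4608098; 3206136; 4357116; 2983970; 4715894; 2734376;
    3659524; 1984378; 3482752; 1329026; 2139630; 664508; 2056808; 301946; 1199310; 141220;
    1129488; -594048; -149600; -1501320; -1307640; -3261688; -2817316; -4157254; -3832222;
    -5433410; -3953100; -5011614; -3971714; -5011384; -2279370; -2820294; -1240280; -1499080;
    1936048; 1652058; 2787578; 2714726; 5501114; 4812242; 4224174; 3797424; 5057184; 3458590;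
    1036530; 151486; 390712; -1395408; -4398670; -4407304; -3691738; -4361384; -6700680;
    -5133942; -3598552; -2779724; -4724426; -1502304; 390874; 2395976; 200486; 4150022; 5258416;
    7158344; 3380520; 6812762; 6444716; 7443346; 2295436; 5022130; 3927128; 4515960; -1086716;
    1736140; 1078566; 1807120; -3155758; -199218; -15092; 480246; -3858722; -1191256; -119970;
    -422606; -3746020; -2138710; -477524; -2445554; -5329538; -5201482; -2995616; -6201904;
    -7331804; -7588254; -3543970; -6921796; -5713078; -6014006; -286866; -4103622; -567038;
    -1470754; 5534102; 876712; 5555128; 3471006; 9976494; 3947896; 8125444; 4592592; 9186776;
    2469138; 4735830; 1228538; 3025546; -2283960; -1922518; -3105550; -3342252; -4942506;
    -6084382; -3319624; -5694466; -3099624; -6078696; 169116; -4295714; 1707110; -2919290;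
    5828194; -651716; 7015172; 661894; 9416324; 1159530; 8090050; 939472; 8288254; -72324;
    5213768; -732206; 4188338; -2273534; 276724; -2698528; -692052; -3637438; -3865484;
    -2664172; -3851332; -2581354; -6095238; -800204; -5107680; -147172; -6199342; 2114074;
    -4501236; 2675500; -5401464; 3827884; -4137208; 3110614; -5142302; 3104838; -3959292;
    2015522; -4548624; 1413528; -3188836; 178764; -3134090; -587448; -1236540; -980774; -167794;
    -1219560; 2250214; -998922; 3640664; -1325884; 5539524; -925132; 6409382; -1404068; 7226640;
    -1368216; 6690412; -2837886; 5491234; -3467474; 3647206; -4860820; 2134962; -4435520;
    1007536; -4528364; 149140; -2867936; -161952; -1745312; 1088; 1166698; 1016762; 3100964;
    1677456; 5846754; 2192676; 6291238; 1327474; 6782928; 117358; 4624842; -2555484; 2962182;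
    -4935050; -556870; -7755328; -2291274; -8905920; -4596750; -9540600; -4130972; -8010858;
    -3763952; -5871682; -818814; -2064254; 1392294; 1347778; 4778088; 4666836; 5930636; 6101862;
    6601542; 6228270; 4583950; 4479980; 2250944; 1984768; -1394328; -982794; -4188452; -3365512;
    -6605568; -4696472; -7082002; -4460144; -6089164; -2671650; -3464316; 54190; -258650;
    3058612; 2776220; 5326354; 4969878; 6532844; 5681862; 6129338; 5044640; 4471546; 2983852;
    1775364; 521868; -1016694; -2050062; -3404902; -3677546; -4776986; -4503712; -5009924;
    -3930710; -4080054; -2630406; -2303232; -553612; -323884; 1138460; 1285638; 2419108;
    2064398; 2616020; 2146042; 2390626; 1626022; 1503244; 829972; 606682; -158044; -518538;
    -981658; -1164844; -1429452; -1472904; -1329882; -1119900; -861908; -643430; -285216;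
    -73928; 148136; 200076; 345044; 321574; 321362; 191304; 154298; 22894; -57742; -199458;
    -251148; -342324; -381524; -442986; -433264; -424396; -368874; -302696; -191566; -74040;
    48556; 154538; 241214; 296030; 312240; 298158; 260026; 211214; 158010; 110644; 75074; 50818;
    37542; 28966; 25458; 20254; 15936; 8170; 2120; -4530; -7916; -10100; -9384; -7712; -4988;
    -2628; -734; 396; 820; 824; 494; 208; -52; -154; -198; -158; -108; -54; -22; -6; 2; 2; 2].

Lemma elim_cert_odd : elim_cert Rbiv A_odd B_odd 1 2 (cofactor 38 6 2 0) H_odd.
Proof. by vm_compute. Qed.

Lemma bezout_cert_odd : bezout_cert 7 U_odd V_odd W_odd H_odd 1 2.
Proof. by vm_compute. Qed.

Definition A_2mod4 : seq (seq Z) :=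
  [:: nseq 37 0 ++ [:: -1; 0; 4; 4; 1; -3; -8; -8; -17; -34; 8; 13; 21; 1; 12; 10; 95; -106;
        101; 20; 162; -129; -41; -360; 338; -554; 285; -378; 1003; -460; 754; -1357; 1907;
        -1692; 1529; -2657; 3152; -2345; 2428; -4912; 3233; -2422; 2842; -3163; 1270; 1943;
        1095; 266; -4730; 3547; 362; 4053; -6461; 6143; -1151; 7747; -8601; -5812; 4391; -2389;
        -2689; -6920; -7961; 19979; -19300; 18571; -28310; 49866; -31054; 46174; -43285; 35360;
        493; -33749; 32665; -76890; 75550; -77675; 56327; -58347; 56808; -21006; 26877; 173;
        -13390; 53849; -51683; 44702; -58630; 23085; -11184; -11738; -3425; -8977; 19472; 5901;
        -3366; -1438; 10932; 9109; -7243; -4016; -760; 8638; -4283; -10197; 123; 2469; 599;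
        -2707; -1064; 4984; 2136; -2167; 736; -2102; 1961; -1607; 776; 19; -94; 565; 216; -315;
        -1129; 316; 276; 366; -775; 207; 226; -10; -431; 78; 184; 403; -144; 79; 79; -43; -139;
        -42; -54; 85; -32; -5; 17; -6; -10; 9; 4; 19; 6; -4; -3; -8; -8; -4; -1; 1; 1];
      nseq 42 0 ++ [:: 2; -2; -6; -4; 4; 14; -4; 0; 30; 50; -44; -12; -84; 170; -144; 14; -170;
        386; -368; 294; -696; 1018; -590; 542; -916; 1350; -1154; 904; -2242; 1836; -1068; 1676;
        -2520; 2666; -1660; 3824; -4316; 1932; -1780; 4512; -3774; -516; -2386; 5038; -596;
        -5042; 3310; -494; 14616; -16000; 9136; -11428; 16878; -17168; -1500; -11468; 14382;
        -2526; -4262; -4114; 12234; 14072; 5504; -19140; 24202; -4486; 13112; -28632; -16352;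
        14816; -14866; 5314; -38190; 41698; -15062; 53646; -59570; 47964; -11864; 22688; -12314;
        -38492; 30672; -20178; 17098; -46078; 19356; 892; 27164; -18212; -3204; 19694; 8968;
        3100; -24482; 1924; 14726; -3984; -9332; -14716; 14376; 5284; -7054; -8750; 2448; 14160;
        -2012; -6256; -3070; 9190; 1412; -5288; -5290; 5292; 4678; -2914; -4014; 1850; 3096;
        -880; -3456; 310; 2966; -346; -1332; -438; 1278; 222; -836; -414; 882; 110; -198; -330;
        142; 12; -100; -154; 148; 58; 8; -42; 24; -6; 2; -16; 20; 12; -2; -12; -2; -2; 2; 2; 4;
        4; 2];
      nseq 37 0 ++ [:: -1; 1; 3; 1; 0; -5; -2; 1; -12; -21; 17; -21; 31; -36; 23; 5; 56; -113;
        201; -146; 188; -215; 139; -202; 314; -696; 732; -738; 1015; -1081; 1415; -1686; 2490;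
        -2976; 3548; -3731; 3856; -4350; 4193; -5105; 4549; -5804; 5604; -5197; 4596; -2569;
        2327; 131; 15; 1544; 2; 370; -1587; 3707; -7295; 5734; -11387; 11725; -15541; 18488;
        -26600; 42201; -46091; 51171; -45798; 39565; -22790; 4383; 4475; -15321; 20819; -37729;
        43263; -54054; 58930; -49399; 37170; -5315; -3957; 18112; -15006; -2067; 11754; -31800;
        24210; -30050; 21115; -14878; 18715; -13569; 15365; 7997; -12914; 32153; -43765; 45818;
        -38631; 16571; -19269; 4128; -2321; -1899; -563; 1419; 11018; -8766; 10139; -4783; 4009;
        1470; -6365; 5361; -3632; -796; 107; -2826; 3096; -2606; 3283; -1067; 2298; -1485; 1525;
        -1028; -728; -753; 670; 545; -1562; 318; 393; 603; -1241; -236; 685; 913; -986; 76; 199;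
        458; -371; -360; 243; 446; -279; 9; -28; 90; -34; -137; -3; 104; -37; 8; 3; 0; 10; -10;
        -1; 14; -4; -6; -2; -5; -4; -4; -2; 1; 1];
      nseq 42 0 ++ [:: 2; -2; -6; -4; 4; 12; 2; 0; 24; 48; -56; 8; -84; 164; -168; 96; -280;
        554; -612; 542; -858; 1362; -1084; 1162; -1700; 2246; -2174; 1540; -2916; 3054; -2680;
        3030; -4214; 4910; -3612; 4874; -5682; 5230; -4226; 6330; -6522; 2774; -4068; 4358;
        -1806; -4256; 6086; -4798; 17668; -23334; 22920; -22248; 27590; -31390; 15704; -15518;
        15788; -12644; -5984; 5774; 6382; 278; 5804; -13302; 35622; -17852; 11226; -18584; 2828;
        14636; -32214; 23562; -49700; 73518; -69836; 63328; -65504; 56394; -14126; 206; -1412;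
        -13944; 35904; -34690; 24184; -49938; 56572; -26964; 8562; -8230; -7564; 36154; -26656;
        -2148; -1520; 12356; 10802; -17498; 1848; 1348; 21560; -26566; 4152; -9880; 15048; 3072;
        -21334; 9142; -1196; 11490; -9026; -5854; 6038; 9654; -2208; -5616; -2150; 6676; 1274;
        -6994; -3274; 4952; 3166; -1942; -4282; 2236; 3676; -1936; -2122; 372; 2514; -34; -1774;
        -268; 1350; -418; -388; -400; 738; 208; -390; -166; 224; -136; -12; -124; 124; 90; -40;
        -36; 48; -18; 14; -10; 10; 12; -4; -12; 0; -4; 0; 2; 4; 4; 2];
      nseq 53 0 ++ [:: 1; 0; -2; -6; -6; 1; 5; 13; 14; 32; 29; 52; -18; 83; -61; 90; -171; 72;
        -268; 143; -651; 402; -561; 788; -855; 956; -709; 2109; -1969; 2433; -2810; 4158; -4614;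
        4276; -7039; 7415; -9540; 9092; -11454; 11162; -9017; 9966; -7787; 8495; -2619; 3577;
        3679; -11915; 20799; -27445; 30369; -43334; 39114; -42037; 40725; -47213; 40307; -28051;
        26082; -8689; -4903; 22853; -15402; 22440; -28455; 26939; -32011; 37259; -55585; 44160;
        -42706; 34311; -20678; 10695; -4698; 12161; -2108; 3453; 437; -10569; 24721; -26897;
        20783; -26873; 20586; -9604; 1685; -6311; 3143; 9189; -7217; 2796; -4811; 7779; -2080;
        -5831; 2055; 616; 1184; -1829; 336; 1542; 687; -1249; 1834; -262; -492; -667; 1346;
        -881; -634; -1212; 1443; 92; -646; -214; 983; 138; -2; -564; 301; 147; -190; -184; 43;
        -8; 28; -97; 14; 31; 1; 16; 29; 12; 2; -12; -1; 4; -1; 2; 5; 5; 2; -1; -1];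
      nseq 58 0 ++ [:: -2; 2; 2; 8; 6; -4; 0; -18; -30; -64; -10; -110; 162; -238; 324; -386;
        648; -698; 1138; -1498; 2100; -2264; 2622; -3478; 3550; -4040; 4494; -5216; 5634; -3852;
        5202; -5276; 5410; -4292; 5090; -8002; 3362; -3908; 3510; -6438; 326; -960; 5164; 3754;
        -5722; 11984; -8988; 29398; -35818; 34986; -56558; 70290; -78766; 58734; -74038; 62950;
        -24210; -2198; 19714; -38678; 103500; -103504; 107310; -118488; 122598; -87534; 31908;
        -40428; -5072; 41322; -61512; 45482; -54890; 78266; -33424; 19592; -12868; 8476; 31284;
        -30630; -6; -12772; 12410; 7102; -29790; 2314; 5408; 16104; -7716; -12346; 9228; 13872;
        -98; -12762; -608; 8312; 5146; -10390; -6432; 6710; 4120; -3172; -5880; 2144; 5556;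
        -990; -4336; 1222; 2038; 1096; -2488; -378; 1690; 382; -1166; -28; 214; 536; -428; -240;
        242; 186; -206; -18; -2; 76; -26; -22; 20; 36; -30; -16; 0; 6; -4; -4; -2; 2; -2; -4;
        -2];
      nseq 53 0 ++ [:: 1; -1; -3; -1; 1; 4; 0; -3; 8; 26; -12; 26; -20; 54; -23; 42; -112; 139;
        -240; 156; -265; 221; -339; 363; -516; 802; -705; 905; -933; 1392; -1443; 2231; -2917;
        3197; -4247; 4558; -5562; 5024; -6614; 6890; -6320; 6661; -5799; 4932; -264; -477; 4878;
        -8164; 12274; -15053; 18287; -24962; 23636; -28818; 26945; -24607; 15633; -9527; 6818;
        4587; -4162; 5083; -3935; 13220; -13593; 10090; -14966; 11742; -9002; 2074; -13365;
        19378; -23747; 37328; -35982; 28246; -9537; 4004; 4022; -17417; 10581; -7720; 9422;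
        -19869; 20483; -18136; 25563; -16135; 2424; 10419; -9529; 9575; -11998; 3256; 479;
        -4245; 872; -1083; 1825; 351; 1517; 102; 392; -185; -316; 1209; -1644; -335; 1027; 90;
        -981; -847; 1386; 137; -764; -416; 1344; 555; -999; -807; 1141; 137; -464; -541; 520;
        589; -450; -460; 261; 84; -16; -194; 23; 208; -24; -89; 39; -2; 13; -1; -6; 22; -5; -20;
        2; 1; -2; 1; 2; 5; 3; -1; -1];
      nseq 58 0 ++ [:: -2; 2; 6; 4; -6; -10; 2; 6; -20; -58; 44; -24; 68; -206; 188; -168; 446;
        -654; 818; -784; 1278; -1708; 1700; -2014; 2556; -3062; 2816; -2784; 3412; -3136; 2672;
        -2632; 3190; -1682; 970; -2052; 1306; 20; -786; -3244; 132; 2846; 582; -2394; -1064;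
        6860; -512; 5674; -16588; 21500; -19920; 28620; -42540; 34404; -37244; 41122; -38500;
        13332; -258; -2890; 36434; -56148; 60312; -53572; 74300; -71558; 43842; -35694; 29644;
        -6040; -37450; 30808; -32108; 46270; -45076; 18338; -692; 21342; -1382; -16674; 13754;
        -2372; 16352; -25204; -6976; 13690; -6842; 9496; -27600; 11326; 13726; -1418; -1828;
        -8940; 14360; 7312; -8692; -10370; 3210; 7276; -348; -9762; -1974; 9572; 2566; -5892;
        -4136; 4050; 5710; -3252; -4680; 2666; 3054; -710; -3410; -22; 2684; -24; -1628; 276;
        854; 438; -1016; -308; 566; 66; -266; 30; 112; 188; -154; -110; 86; 28; -30; 8; -10; 14;
        -18; -24; 4; 8; 0; 6; 4; 2; -2; -4; -2]].

Definition B_2mod4 : seq (seq Z) :=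
  [:: nseq 37 0 ++ [:: 1; -1; -3; -1; 1; 4; 0; -5; 11; 29; -12; 35; -26; 47; -47; 17; -122; 177;
        -351; 261; -267; 320; -444; 294; -361; 1035; -849; 628; -236; 1008; -940; 323; -1301;
        2112; -3073; 1973; -3899; 5989; -7371; 7282; -9139; 13696; -11051; 11498; -9536; 10217;
        -987; -5123; 3993; -15004; 21978; -30403; 29647; -51924; 62684; -54045; 52400; -51265;
        36013; 13744; -19928; 28477; -60487; 94167; -90084; 72799; -101381; 71247; -4279;
        -52405; 65307; -95593; 134055; -85681; 34537; -10896; 6717; 40681; -67985; 48816;
        -73376; 101513; -104736; 59141; -41194; 11213; 54863; -81242; 74120; -53988; 62971;
        -29394; -2090; -6656; 16645; -3847; -17765; -3110; -1019; 20352; -19967; 15; 3321;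
        13641; -4631; -6209; -702; 11152; -3244; -6126; 12; 4465; 1810; -5519; -269; 3540; 758;
        -2524; -679; 1691; 1238; -2440; -125; 564; 652; -725; -497; 504; 653; -548; -62; 19;
        168; -18; -172; 19; 122; -49; 5; 23; 15; 22; -7; 6; 15; -8; -11; -3; -4; -3; -4; -2; 1;
        1];
      nseq 42 0 ++ [:: -2; 2; 6; 4; -4; -12; -4; 8; -26; -56; 46; -22; 98; -166; 174; -60; 456;
        -720; 936; -1000; 1512; -2166; 1864; -2586; 3658; -4976; 4982; -5238; 6930; -6468; 6296;
        -6086; 7892; -6716; 3926; -4544; 1988; -426; -4356; 1512; -3634; 9468; -7100; 8252;
        -7208; 17368; -8504; 6794; -13976; 13262; -8774; 744; -23818; 20750; -23720; 37570;
        -56854; 57790; -35580; 52856; -40844; 19048; 5202; -8742; 30656; -92062; 105594;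
        -114440; 121720; -126078; 85180; -32106; 30292; -6708; -23202; 40300; -37694; 55312;
        -93926; 75182; -53758; 43030; -19262; -22854; 42154; -16286; 16030; -18418; -6312;
        25226; -5964; -8822; -12466; 14650; 8328; -5796; -18066; 8904; 15524; -6468; -9656;
        -4824; 17868; -1470; -10480; -4038; 10396; 2970; -5326; -6026; 6762; 4060; -4566; -2510;
        1060; 3776; -1554; -2626; 1084; 1912; -818; -460; -552; 1210; -86; -642; -58; 386; -206;
        30; -226; 186; 56; -48; -24; 82; -32; 12; -28; 6; 2; -10; -12; 6; 0; 2; 2; 4; 4; 2];
      nseq 45 0 ++ [:: -1; 1; 2; 3; 2; -7; -6; 0; 0; -15; -7; -52; 71; -67; 44; -129; 227; -129;
        413; -582; 786; -691; 935; -1456; 1490; -1898; 2283; -3598; 3480; -3652; 4653; -5351;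
        6091; -5098; 8207; -8247; 8110; -8298; 8923; -8915; 3728; -7467; 4757; -2897; -1651;
        169; -5217; 21625; -18806; 25117; -28504; 42857; -34771; 34835; -56270; 53878; -51135;
        37018; -45989; 16942; 5272; -5674; 14136; -25915; 53836; -40910; 74165; -96168; 92993;
        -76676; 59481; -60071; 6097; 5545; -2475; 8177; -29222; 38928; -18117; 41017; -48880;
        30486; -6268; 11981; -18750; -5203; 1333; 13036; -13446; -5603; 6154; 6413; 7039;
        -11904; 2087; 5171; 4572; -8676; -2064; -46; 6592; -2904; -5223; 1387; 3545; 729; -3374;
        -503; 2535; 1989; -2557; -703; 473; 1506; -1150; -717; 158; 1140; -356; -322; -133; 516;
        -82; -114; -100; 249; 23; -80; -91; 27; -31; -19; -25; 11; 5; -13; -9; 8; 3; 2; 5; 7; 6;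
        1; -2; -1];
      nseq 50 0 ++ [:: 2; -2; -4; -8; 0; 14; 8; 8; 20; 58; -28; 24; -204; 214; -292; 276; -618;
        814; -884; 1250; -1846; 2290; -2030; 2694; -3246; 3460; -3104; 3050; -4348; 2806; -2242;
        2600; -2754; 2202; 242; 2198; -642; -994; 640; 1228; -882; -2918; -2596; 566; 2292;
        -6622; 2544; -8272; 26808; -26634; 35170; -43796; 59434; -47022; 33798; -39240; 22012;
        632; -27020; 27534; -57230; 82904; -83644; 75658; -69172; 68630; -22932; 11058; 150;
        -12100; 35912; -45168; 28374; -49968; 39466; -23090; -1266; -3290; -2488; 24288; -4954;
        -5852; 10382; 7914; 8116; -13426; -8642; 6036; 2882; -11204; -9506; 4174; 9570; 1766;
        -10094; 4322; 8114; 2446; -6686; -2992; 5692; 3360; -5598; -3296; 2556; 2056; -1688;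
        -3210; 2048; 2028; -510; -1314; 364; 812; -46; -1126; 384; 476; 80; -176; 28; 114; 78;
        -258; 2; 62; 6; -32; -8; -10; 18; -16; 6; 24; 16; 4; 2; -4; -6; -8; -6; -2]].

Definition H_2mod4 : seq Z :=
  [:: 2; 4; 10; 4; -12; -76; -174; -356; -556; -800; -958; -908; -614; 624; 2140; 6312; 10076;
    20188; 26966; 47616; 56426; 94168; 100562; 165488; 159324; 267460; 229758; 406732; 305016;
    590004; 372372; 823832; 412212; 1114348; 396800; 1467252; 289208; 1885104; 41380; 2367344;
    -400150; 2911532; -1088752; 3510836; -2063598; 4151508; -3333462; 4806364; -4843418;
    5447016; -6438716; 6039204; -7851442; 6537908; -8716128; 6849796; -8653036; 6812088;
    -7361986; 6200932; -4755136; 4786108; -1019446; 2464320; 3377712; -615196; 7789486;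
    -3960352; 11534782; -6841400; 14032548; -8513116; 14910184; -8513116; 14032548; -6841400;
    11534782; -3960352; 7789486; -615196; 3377712; 2464320; -1019446; 4786108; -4755136;
    6200932; -7361986; 6812088; -8653036; 6849796; -8716128; 6537908; -7851442; 6039204;
    -6438716; 5447016; -4843418; 4806364; -3333462; 4151508; -2063598; 3510836; -1088752;
    2911532; -400150; 2367344; 41380; 1885104; 289208; 1467252; 396800; 1114348; 412212; 823832;
    372372; 590004; 305016; 406732; 229758; 267460; 159324; 165488; 100562; 94168; 56426; 47616;
    26966; 20188; 10076; 6312; 2140; 624; -614; -908; -958; -800; -556; -356; -174; -76; -12; 4;
    10; 4; 2].

Definition U_2mod4 : seq Z :=
  [:: 0; 0; -3; 0; -1; 0; 3; 1; -2; 0; 2; 2; 3; 1; -1; -1; -3; 0; 3; 2; 0; -3; 3; -3; 1; -2; 2;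
    3; 3; -1; 3; -3; 2; 3; -3; -3; 3; 2; 3; 2; -3; -2; -2; -2; -1; -1; -3; 1; -2; 0; 1; -1; 2;
    1; 0; 0; 3; 2; 3; -1; -3; 2; -2; 3; -2; 0; -2; 3; 2; -3; 1; 1; -2; -1; 1; -3; -2; -2; 2; 3;
    0; 0; -3; -3; -1; -2; -2; -1; 2; 1; -1; -1; -2; -3; -3; 0; -2; -3; 2; -2; 0; 2; 0; -3; 3; 0;
    1; 1; -2; 3; 1; 0; -2; -1; -2; -2; 2; 3; 3; 0; 3; -3; 3; -2; -1; 3; 1; -3; -1; -2; -2; 1;
    -3; 1; 3; 3; 3; 3; 1; -2; 1; -2; 2; 1; -1; -1; 1; -2; -3; -1; 0; 1; 0; -3; -1; 1; 0; -3; -3;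
    0; -3; 2; -1; -1; 1; 3; 3; -3; 2; 1; 3; 2; 2; 3; -2; -3; -1; 2; 0; 1; -1; -3; 1; 1; 0; -3;
    0; -3; -2; 1; -3; 3; 3; -1; -1; 1; -2; 3; -2; -1; 2; -1; 1; 3; -3; -3; 2; 2; -3; 3; -3; 1;
    3; 1; 3; 0; 3; -2; 1; -2; 0; 0; 0; -2; 1; 2; 1; -1; -1; -3; 0; 2; 3; -3; -2; -1; 0; -1; 2;
    1; -2; -1; -3; 1; 3; -2; -3; 1; -2; -2; 3; 1; 0; 2; 2; -3; 2; -1; 1; -3; 3; 3; -1; 1; 3; -1;
    0; -2; 2; 0; -2; 3; 0; 2; -3; -2; -2; -1; 2; 2; 2; -2; 1; 0; 0; -1; -3; -1].

Definition V_2mod4 : seq Z :=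
  [:: -3; 0; -3; -1; -3; -1; 1; 3; -2; -3; 3; -1; -3; 3; 1; -1; 1; 0; -1; 1; 0; -2; -2; 3; 0;
    -1; 1; 2; 3; 1; -2; -2; 0; 1; -3; -2; 2; 1; 3; 0; -1; 1; 3; 2; -1; -2; 2; 1; -2; -2; -1; 2;
    1; 2; -3; 2; 1; -3; -2; -2; -1; -1; -1; 1; 3; -2; 0; 2; -2; 1; 2; -3; 0; -3; 3; -2; -1; -1;
    1; 3; 1; -1; 1; 1; 2; 0; 1; 3; 0; -1; 3; 3; 0; 2; 1; -1; 1; -1; 1; -2; 3; 3; -2; -2; 2; -1;
    -1; 1; 0; 2; -2; -2; 0; -3; 3; -2; 2; 0; 3; 1; 1; -2; 0; 1; -1; -3; 2; 3; -3; -2; -2; 3; -3;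
    0; 3; 1; -1; -2; -1; 0; 1; 0; -2; 1].

Definition W_2mod4 : seq Z :=
  [:: -1; 0; 0; -2; -8; -2; 4; 34; 82; 162; 234; 368; 454; 340; 58; -474; -1106; -3264; -5398;
    -9746; -12114; -21126; -24800; -39394; -38010; -62434; -53994; -92396; -62150; -124132;
    -58756; -160590; -36762; -198000; 28920; -238082; 115400; -286648; 309992; -331612; 504218;
    -404180; 919856; -457148; 1251982; -580204; 1965254; -644444; 2381664; -842822; 3343872;
    -899772; 3547420; -1176812; 4391694; -1142674; 3717386; -1365314; 3792344; -870224; 1524932;
    -475692; 494584; 1360320; -3364822; 3259922; -4949080; 7116658; -9615106; 10439190;
    -10864864; 15349274; -15611364; 18211774; -15974174; 21900198; -20148348; 22151580;
    -18663632; 23133614; -20532520; 20044472; -15173494; 18091374; -12518538; 11609196;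
    -2231418; 6693618; 4922486; -2682588; 17827938; -9141462; 26075012; -18489488; 36478480;
    -22545550; 41095820; -27348162; 44138964; -25475262; 42217226; -23827840; 36163012;
    -16691650; 28695848; -11026554; 16444796; -2435346; 8428360; 3248072; -3761544; 9497944;
    -6724056; 11883672; -13740642; 13478298; -10334930; 11132338; -11787928; 8906692; -6102286;
    4307900; -5090308; 3300036; -3056606; 1355572; -2525184; 5977062; -7762714; 7337406;
    -7786650; 15344580; -18961278; 14221014; -16263286; 19426632; -28170514; 10729182;
    -19611412; 11347106; -28247930; -2860006; -15305082; -2434994; -21506132; -15918926;
    -9567302; -11188396; -16263106; -20045418; -8730572; -10994622; -16490242; -15713806;
    -12044018; -5716026; -19033314; -8639448; -13892406; -617024; -18053218; -3209396; -9700706;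
    2305354; -10870268; -283642; -1030332; 4015808; -1551232; 1926468; 4660944; 7540548;
    3013364; 7171846; 2278434; 15781558; 1598680; 16298388; -4599708; 24933366; -480000;
    21423874; -8721814; 24079906; 416486; 12754452; -8039004; 8927510; 1720766; -6069390;
    -6295304; -8020284; -1306352; -18568286; -7771740; -10697952; -10405362; -15954836;
    -13385740; 221278; -22185222; -7767280; -18775960; 10016106; -28298534; -6991530; -16270500;
    9968284; -22008312; -13974070; -4141552; 4111544; -7720242; -20621334; 8152496; -704430;
    1771092; -21273148; 10022934; -1106174; 274022; -14076834; 2888640; 4497016; -5083496;
    152704; -2387290; 14298020; -3726670; 15209850; 1849668; 21234938; 7187808; 22266396;
    13758260; 19747104; 21900100; 19150276; 25756116; 12463414; 32325360; 11135248; 31256848;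
    4435654; 34080610; 1548854; 28897184; -4320774; 28578168; -10333272; 21884274; -14246616;
    19653882; -21710102; 12925712; -20043756; 8461678; -25670786; 1445552; -15994108; -6037788;
    -19540486; -12735022; -3100906; -22173546; -7376108; -26019760; 13095770; -35457008;
    5328274; -34432646; 27630546; -43167406; 14620376; -36962484; 36160626; -44521588; 16449954;
    -33030856; 34067502; -37735470; 8168478; -21340174; 21025582; -22204632; -6142388; -4329836;
    4475262; -3593090; -17223514; 9524650; -6798772; 8518576; -19579460; 12896838; -10163148;
    9939062; -14512406; 6780204; -7568562; 4017316; -5219984; -3523632; -732440; -5329170;
    6343616; -14848824; 9061782; -15913246; 17881890; -24374862; 18495180; -23399718; 24764554;
    -26787266; 21743218; -21821906; 21680152; -17915232; 14649850; -9156812; 8216400; 251740;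
    339044; 9327956; -8159960; 18866552; -11819338; 22914838; -17447390; 26787584; -13848900;
    22513046; -14516260; 19087500; -4423048; 8534704; -1777396; 1683488; 10449274; -9128398;
    11796422; -13618810; 20297260; -19546756; 16206748; -18683244; 18304664; -18716894; 9626714;
    -13698606; 8436576; -10570452; 241410; -5073148; 449688; -2551202; -3987546; 405354;
    -1454012; 533098; -3092588; 812610; -84628; -320612; -797146; -725198; 1545304; -1303584;
    1049088; -1144868; 2526432; -933784; 1942734; -555376; 2501544; -298188; 1677250; -248420;
    1555704; -266066; 723722; -462256; 424656; -549822; -120654; -712970; -299412; -715108;
    -530820; -755466; -559414; -673862; -584214; -623094; -523150; -511186; -456652; -427678;
    -370588; -327382; -288360; -249842; -214378; -177684; -149792; -121268; -99342; -76616;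
    -59068; -43128; -31926; -21698; -14010; -8244; -4840; -2258; -566; 314; 564; 624; 564; 408;
    256; 140; 58; 12; 0; -4; -4; -2].

Lemma elim_cert_2mod4 : elim_cert Rbiv A_2mod4 B_2mod4 (-1) 2 (cofactor 38 8 8 2) H_2mod4.
Proof. by vm_compute. Qed.

Lemma bezout_cert_2mod4 : bezout_cert 7 U_2mod4 V_2mod4 W_2mod4 H_2mod4 (-1) 2.
Proof. by vm_compute. Qed.

Definition A_0mod4 : seq (seq Z) :=
  [:: nseq 23 0 ++ [:: -1; 0; 0; 0; 3; 0; 7; -2; 9; 0; 21; 9; 25; 14; 23; 10; 13; 24; -9; 21;
        -68; -39; -59; -78; -11; -9; 47; 54; -36; 42; -75; -91; -100; -87; 81; 3; 104; 122; 27;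
        55; -66; -27; -37; -35; 55; 0; 58; 24; 44; -8; -24; -7; -5; -4; -7; 8; -20; 0; -7; -1;
        -2; -2; -6; -2; 0; -1; 0; 0; 0; -1];
      nseq 31 0 ++ [:: -2; 2; 0; 0; 8; -8; 18; -20; 10; -12; 14; 4; -2; 22; -18; -10; -24; -28;
        68; 0; 62; 80; 2; 60; -110; 52; -44; -36; 32; -10; 60; -4; -42; 34; -122; -26; -68; -58;
        -16; -68; 14; -76; 2; -18; 30; -4; 32; 18; 28; 22; 20; 32; 8; 14; 4; 12; 4; 12; 0; 4; 0;
        0; 0; 2];
      nseq 31 0 ++ [:: 1; 0; 1; 1; -4; 0; -12; -3; -11; -3; -9; -8; -16; -40; -18; -66; 10; -21;
        43; 31; 46; 36; 13; -1; 5; 24; 19; 47; 16; 84; -37; 21; -47; -40; -8; -19; 37; 35; 18;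
        51; -31; 12; -37; -7; -1; -37; 24; -27; 8; -17; -1; -17; -1; -3; 0; 1; 1; -3; 0; 0; -1;
        1];
      nseq 39 0 ++ [:: 2; 0; 2; 2; -12; 0; -38; -10; -26; -24; 28; -14; 54; -6; 0; 10; -32; 4;
        -8; 12; 50; -10; 30; 32; -24; 2; -56; 14; 20; -8; 68; 6; 36; 20; -18; 28; -38; 28; -22;
        -10; -12; -2; -2; -20; -8; -14; 4; -8; 8; -10; 0; -4; 0; 0; 2; -2]].

Definition B_0mod4 : seq (seq Z) :=
  [:: nseq 23 0 ++ [:: 1; 0; 0; 0; -3; 0; -7; -2; -9; 0; -21; 9; -25; 14; -23; 10; -13; 24; 9;
        21; 68; -39; 59; -78; 11; -9; -47; 54; 36; 42; 75; -91; 100; -87; -81; 3; -104; 122;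
        -27; 55; 66; -27; 37; -35; -55; 0; -58; 24; -44; -8; 24; -7; 5; -4; 7; 8; 20; 0; 7; -1;
        2; -2; 6; -2; 0; -1; 0; 0; 0; -1];
      nseq 31 0 ++ [:: 2; 2; 0; 0; -8; -8; -18; -20; -10; -12; -14; 4; 2; 22; 18; -10; 24; -28;
        -68; 0; -62; 80; -2; 60; 110; 52; 44; -36; -32; -10; -60; -4; 42; 34; 122; -26; 68; -58;
        16; -68; -14; -76; -2; -18; -30; -4; -32; 18; -28; 22; -20; 32; -8; 14; -4; 12; -4; 12;
        0; 4; 0; 0; 0; 2];
      nseq 31 0 ++ [:: -1; 0; -1; 1; 4; 0; 12; -3; 11; -3; 9; -8; 16; -40; 18; -66; -10; -21;
        -43; 31; -46; 36; -13; -1; -5; 24; -19; 47; -16; 84; 37; 21; 47; -40; 8; -19; -37; 35;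
        -18; 51; 31; 12; 37; -7; 1; -37; -24; -27; -8; -17; 1; -17; 1; -3; 0; 1; -1; -3; 0; 0;
        1; 1];
      nseq 39 0 ++ [:: -2; 0; -2; 2; 12; 0; 38; -10; 26; -24; -28; -14; -54; -6; 0; 10; 32; 4;
        8; 12; -50; -10; -30; 32; 24; 2; 56; 14; -20; -8; -68; 6; -36; 20; 18; 28; 38; 28; 22;
        -10; 12; -2; 2; -20; 8; -14; -4; -8; -8; -10; 0; -4; 0; 0; -2; -2]].

Definition L_0mod4 : seq Z :=
  [:: 2; 4; -2; -20; -50; -116; -228; -364; -510; -604; -460; -76; 272; 320; 234; 444; 966;
    1280; 966; 444; 234; 320; 272; -76; -460; -604; -510; -364; -228; -116; -50; -20; -2; 4; 2].

Definition U_0mod8 : seq Z :=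
  [:: 2; -1; -3; -3; 1; 1; 1; 1; 0; -2; 3; 2; -2; 3; -2; -2; 2; -2; 1; 0; -2; -2; 1; 1; 0; 1;
    -1; -3; 3; -1; -3; 0; -1; -3].

Definition V_0mod8 : seq Z :=
  [:: 2; 1; -3; 3; 1; -1; 1; -1; 0; 2; 3; -2; -2; -3; -2; 2; 2; 2; 1; 0; -2; 2; 1; -1; 0; -1;
    -1; 3; 3; 1; -3; 0; -1; 3].

Definition W_0mod8 : seq Z :=
  [:: 1; 0; -4; 0; -24; 0; -36; 0; 88; 0; 540; 0; 752; 0; -664; 0; -340; 0; -1040; 0; -1896; 0;
    700; 0; 496; 0; 1196; 0; 2224; 0; 432; 0; -944; 0; -560; 0; -744; 0; -644; 0; 1364; 0; 264;
    0; -268; 0; -592; 0; -1772; 0; -1484; 0; -528; 0; 112; 0; 652; 0; 868; 0; 420; 0; 116; 0;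
    16; 0; -4].

Definition U_4mod8 : seq Z :=
  [:: -1; 0; -1; -2; 0; -2; -3; -1; -1; 2; -3; -3; -3; 3; -3; 2; 3; -3; 3; -2; 2; -3; -2; 1; -3;
    -1; 0; 3; 0; 3; 0; 2; -3; -2; 3; 3; -1; 0; 0; 0; -2; 2; -3; 1; -3; 1; -2; 0; -3; -2; 1; -3;
    -3; -3; -3; 1; 3; 3; 0; -1; 3; -3; 3; -3; -2; 2; 1; 1].

Definition V_4mod8 : seq Z :=
  [:: -2; 2; 3; -2; 3; 0; 3; 1; -2; 0; -3; 1; 1; 1; -3; 0; 3; -1; 3; -3; 3; 2; 3; 1; -2; 3; -3;
    1; 2; -2; 3; 2; -3; -1].

Definition W_4mod8 : seq Z :=
  [:: -1; 0; 2; 0; 6; 20; 36; 88; 164; 206; 254; 412; 522; 346; 244; 502; 436; -292; -612; -40;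
    24; -768; -1222; -1404; -1386; -672; -354; -1044; -1224; -56; 1332; 896; -164; 780; 1398;
    22; -430; -56; -464; -610; -768; -810; -464; -344; 446; 930; 14; 568; 2246; 992; -790; 558;
    1810; 632; -610; -490; 276; 742; 160; -402; -256; -378; 82; -192; -2430; -2450; -282; -524;
    -1844; -1750; -930; 116; 524; 574; 1198; 976; 352; 972; 1170; 444; 122; -94; -488; -222;
    322; 132; -244; 28; 424; 270; -74; -170; -132; -128; -108; -58; -30; -14; 0; 2].

Lemma elim_cert_0mod4 :
  elim_cert Rbiv A_0mod4 B_0mod4 (-1) 1 (cofactor 24 2 2 0) (zpcomp 1 2 L_0mod4).
Proof. by vm_compute. Qed.

Lemma bezout_cert_0mod8 : bezout_cert 7 U_0mod8 V_0mod8 W_0mod8 L_0mod4 (-1) 1.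
Proof. by vm_compute. Qed.

Lemma bezout_cert_4mod8 : bezout_cert 7 U_4mod8 V_4mod8 W_4mod8 L_0mod4 (-1) 2.
Proof. by vm_compute. Qed.

Definition Phi6 : seq Z := [:: 1; -1; 1].

Definition Q_6_0 : seq Z :=
  [:: 3; 2; -1; -3; -2; 2; 3; 0; -2; -1; 0; 1; 1].

Definition Q_6_1 : seq Z :=
  [:: -1; 1; 2; 1; -1; -1; 0; 2; 1; -1; -1; -2; 1; 2; 1; 0; -2; -2; -1; 1; 2; 1].

Definition Q_6_2 : seq Z :=
  [:: 2; -2; -4; -2; 1; 4; 3; 0; -2; -2; -2; 0; 3; 3; 1; -4; -3; 0; 3; 2; -1; -1; 0; 0; -1; -1;
    -1; 1; 2; 1].

Lemma div_cert_6_0 : div_cert (bpdiag 0 Rbiv) Phi6 Q_6_0 [:: -3].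
Proof. by vm_compute. Qed.

Lemma div_cert_6_1 : div_cert (bpdiag 2 Rbiv) Phi6 Q_6_1 [:: 0; -3].
Proof. by vm_compute. Qed.

Lemma div_cert_6_2 : div_cert (bpdiag 4 Rbiv) Phi6 Q_6_2 [:: -3; 3].
Proof. by vm_compute. Qed.

End CertificateData.

Section Cases.
Variables (t b : nat).
Hypotheses (b_gt2 : (2 < b)%N)
  (Rroot : forall w : algC, b.-primitive_root w -> bpeval Rbiv w (w ^+ (2 * t)) = 0).

Let b_gt0 : (0 < b)%N. Proof. exact: ltnW (ltnW b_gt2). Qed.

Lemma Rbiv_twist_root s k j (w : algC) :
  ZtoR s ^+ 2 = 1 :> algC -> coprime j b -> b.-primitive_root w ->
  w ^+ j = ZtoR s * w ^+ k -> bpeval Rbiv (ZtoR s * w ^+ k) ((w ^+ (2 * t)) ^+ k) = 0.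
Proof.
move=> s2 j_cop w_prim wj; rewrite -wj.
have -> : (w ^+ (2 * t)) ^+ k = (w ^+ j) ^+ (2 * t).
  by rewrite wj exprMn (exprM (ZtoR s)) s2 expr1n mul1r -!exprM mulnC.
by apply: Rroot; rewrite prim_root_exp_coprime.
Qed.

Lemma cofactor_root A B s k j a1 a2 a3 a4 H (w : algC) :
  elim_cert Rbiv A B s k (cofactor a1 a2 a3 a4) H -> (0 < k)%N ->
  ZtoR s ^+ 2 = 1 :> algC -> b != 6%N -> coprime j b -> b.-primitive_root w ->
  w ^+ j = ZtoR s * w ^+ k -> zpeval H w = 0.
Proof.
move=> cert k_gt0 s2 b_neq6 j_cop w_prim wj.
have /eqP := elim_cert_sound cert k_gt0 (Rroot w_prim) (Rbiv_twist_root s2 j_cop w_prim wj).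
by rewrite mulf_eq0 (negPf (cofactor_prim_neq0 _ _ _ _ b_gt2 b_neq6 w_prim)) => /eqP.
Qed.

Lemma Rbiv_nonvanishing_cert A B s k j a1 a2 a3 a4 H m U V W :
  elim_cert Rbiv A B s k (cofactor a1 a2 a3 a4) H -> bezout_cert m U V W H s k ->
  (1 < m)%N -> (0 < k)%N -> ZtoR s ^+ 2 = 1 :> algC -> b != 6%N -> coprime j b ->
  (forall w : algC, b.-primitive_root w -> w ^+ j = ZtoR s * w ^+ k) -> False.
Proof.
move=> elim bezout m_gt1 k_gt0 s2 b_neq6 j_cop wj.
have Hroot (w : algC) : b.-primitive_root w -> zpeval H w = 0.
  by move=> w_prim; apply: cofactor_root elim k_gt0 s2 b_neq6 j_cop w_prim (wj w w_prim).
have [z z_prim] := C_prim_root_exists b_gt0.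
apply: (bezout_cert_sound bezout) (Aint_prim_root z_prim) (Hroot z z_prim) _ => //.
by rewrite -wj // Hroot // prim_root_exp_coprime.
Qed.

Lemma Rbiv_nonvanishing_odd : odd b -> False.
Proof.
move=> b_odd.
apply: (Rbiv_nonvanishing_cert (j := 2) elim_cert_odd bezout_cert_odd) => //.
- by rewrite ZtoR1 expr1n.
- by apply: contraTneq b_odd => ->.
- by rewrite coprime2n.
by move=> w _; rewrite ZtoR1 mul1r.
Qed.

Lemma Rbiv_nonvanishing_2mod4 h : b = (2 * h)%N -> odd h -> h != 3%N -> False.
Proof.
move=> b2h h_odd h_neq3.
apply: (Rbiv_nonvanishing_cert (j := h + 2) elim_cert_2mod4 bezout_cert_2mod4) => //.
- by rewrite ZtoRN1 sqrrN expr1n.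
- by move: h_neq3; rewrite b2h; lia.
- apply: (coprime_odd_dvd_add_pow2 (e := 2)); first by rewrite oddD h_odd.
  by rewrite b2h; apply/dvdnP; exists 2%N; lia.
by move=> w w_prim; rewrite exprD (prim_expr_half b_gt2 w_prim b2h) ZtoRN1.
Qed.

Lemma L_0mod4_sqr_root h (w : algC) : b = (2 * h)%N -> ~~ odd h ->
  b.-primitive_root w -> zpeval L_0mod4 (w ^+ 2) = 0.
Proof.
move=> b2h h_even w_prim; rewrite -[w ^+ 2]mul1r -ZtoR1 -zpeval_comp //.
apply: (cofactor_root (j := h + 1) elim_cert_0mod4 _ _ _ _ w_prim) => //.
- by rewrite ZtoRN1 sqrrN expr1n.
- by apply: contraNneq h_even; rewrite b2h => h3; rewrite (_ : h = 3%N) //; lia.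
- apply: (coprime_odd_dvd_add_pow2 (e := 1)); first by rewrite addn1 /= h_even.
  by rewrite b2h; apply/dvdnP; exists 2%N; lia.
by rewrite exprD (prim_expr_half b_gt2 w_prim b2h) ZtoRN1.
Qed.

Lemma Rbiv_nonvanishing_0mod4 h : b = (2 * h)%N -> ~~ odd h -> False.
Proof.
move=> b2h h_even; have Lroot := L_0mod4_sqr_root b2h h_even.
have [z z_prim] := C_prim_root_exists b_gt0.
have Az2 : z ^+ 2 \in Aint by rewrite rpredX // (Aint_prim_root z_prim).
have zh : z ^+ h = -1 := prim_expr_half b_gt2 z_prim b2h.
have h2m : h = (2 * h./2)%N by rewrite -[LHS]odd_double_half (negPf h_even) add0n -mul2n.
set m := h./2 in h2m.
have [m_odd | m_even] := boolP (odd m).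
  apply: (bezout_cert_sound bezout_cert_4mod8) Az2 (Lroot z z_prim) _ => //.
  have -> : ZtoR (Zneg 1) * (z ^+ 2) ^+ 2 = (z ^+ (m + 2)) ^+ 2.
    by rewrite ZtoRN1 -zh -!exprM -exprD h2m; congr (_ ^+ _); lia.
  apply: Lroot; rewrite prim_root_exp_coprime //.
  apply: (coprime_odd_dvd_add_pow2 (e := 3)); first by rewrite oddD m_odd.
  by rewrite b2h h2m; apply/dvdnP; exists 4%N; lia.
apply: (bezout_cert_sound bezout_cert_0mod8) Az2 (Lroot z z_prim) _ => //.
have -> : ZtoR (Zneg 1) * (z ^+ 2) ^+ 1 = (z ^+ (m + 1)) ^+ 2.
  by rewrite ZtoRN1 -zh expr1 -!exprM -exprD h2m; congr (_ ^+ _); lia.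
apply: Lroot; rewrite prim_root_exp_coprime //.
apply: (coprime_odd_dvd_add_pow2 (e := 2)); first by rewrite addn1 /= m_even.
by rewrite b2h h2m; apply/dvdnP; exists 4%N; lia.
Qed.

Lemma Rbiv_nonvanishing_6 : b = 6%N -> False.
Proof.
move=> b6; have [z z_prim] := C_prim_root_exists b_gt0.
have z_neq0 := prim_root_neq0 b_gt2 z_prim; have z_neq1 := prim_root_neq1 b_gt2 z_prim.
have Phi6z : zpeval Phi6 z = 0.
  have -> : zpeval Phi6 z = z ^+ 2 - z + 1.
    by rewrite /zpeval !leval_cons leval_nil ZtoR1 ZtoRN1; ring.
  by apply/eqP; rewrite (prim_root_Phi6_eq0 b_gt2 z_prim) b6.
have Rem_root j Q Rm :
    div_cert (bpdiag (2 * j) Rbiv) Phi6 Q Rm -> (t %% 3 = j)%N -> zpeval Rm z = 0.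
  move=> cert t3; have := Rroot z_prim.
  rewrite -(prim_expr_mod z_prim) (_ : (2 * t) %% b = 2 * j)%N; last by rewrite b6; lia.
  by rewrite -bpeval_diag (div_cert_sound z cert) Phi6z mulr0 add0r.
have : (t %% 3 < 3)%N by rewrite ltn_mod.
case t3: (t %% 3)%N => [|[|[|]]] // _.
- move/eqP: (Rem_root 0%N _ _ div_cert_6_0 t3).
  by rewrite zpevalC ZtoR_neg oppr_eq0 pnatr_eq0.
- move/eqP: (Rem_root 1%N _ _ div_cert_6_1 t3).
  rewrite /zpeval !leval_cons leval_nil ZtoR0 ZtoR_neg add0r mulr0 addr0.
  by rewrite mulf_eq0 (negPf z_neq0) oppr_eq0 pnatr_eq0.
move/eqP: (Rem_root 2%N _ _ div_cert_6_2 t3).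
rewrite /zpeval !leval_cons leval_nil ZtoR_pos ZtoR_neg mulr0 addr0 /=.
rewrite (_ : _ + _ = 3%:R * (z - 1)); last by ring.
by rewrite mulf_eq0 pnatr_eq0 subr_eq0 (negPf z_neq1).
Qed.

End Cases.

Theorem mainTheorem5 (t b : nat) : (3 <= b)%N -> ~~ ('Phi_b %| Rpoly t).
Proof.
move=> b_gt2; apply/negP => /Rbiv_prim_root Rroot.
have [b_odd | b_even] := boolP (odd b).
  exact: (Rbiv_nonvanishing_odd b_gt2 Rroot b_odd).
have b2h : b = (2 * b./2)%N by rewrite -[LHS]odd_double_half (negPf b_even) add0n -mul2n.
have [h_odd | h_even] := boolP (odd b./2); last first.
  exact: (Rbiv_nonvanishing_0mod4 b_gt2 Rroot b2h h_even).
have [h3 | h_neq3] := eqVneq b./2 3%N; last first.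
  exact: (Rbiv_nonvanishing_2mod4 b_gt2 Rroot b2h h_odd h_neq3).
by apply: (Rbiv_nonvanishing_6 b_gt2 Rroot); rewrite b2h h3.
Qed.
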